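(* Let $\gamma_1,\gamma_2>0$ and consider the birth-death chain RDS $(\theta,\varphi)$ on $\mathbb{N}_0$ described in the context, and let $W_0=\{0,2,4,\dots\}$, $W_1=\{1,3,5,\dots\}$. Let $K:\mathcal{Q}_+\to\mathcal{P}(\mathbb{N}_0)$, $q\mapsto K_q$, be a finite random set such that, for some $i\in\{0,1\}$, $K_q\subset W_i$ for $\mathbb{P}$-a.e. $q$. Then $\#\varphi^n_q(K_q)\to1$ in probability as $n\to\infty$ (where $\#$ denotes cardinality).
   Context: Noise space: $\mathcal{Q}_+=\{q=(q_n)_{n\in\mathbb{N}_0}: q_n\in[0,1]\}$ with the product Borel $\sigma$-algebra and the product measure $\mathbb{P}=\lambda^{\mathbb{N}_0}$, $\lambda$ Lebesgue measure on $[0,1]$; shift $\theta(q_0,q_1,\dots)=(q_1,q_2,\dots)$. For $q\in\mathcal{Q}_+$ define $f_q:\mathbb{N}_0\to\mathbb{N}_0$ by $f_q(x)=x+1$ if $q_0<\frac{\gamma_1}{\gamma_1+\gamma_2x}$ and $f_q(x)=x-1$ otherwise. The cocycle is $\varphi^0_q(x)=x$ and $\varphi^n_q(x)=f_{\theta^{n-1}q}\circ\cdots\circ f_q(x)$ for $n\geq1$. A map $K:\mathcal{Q}_+\to\mathcal{P}(\mathbb{N}_0)$ is a random set if $q\mapsto d(x,K_q)=\inf_{y\in K_q}|x-y|$ is measurable for every $x$; it is a finite random set if moreover $K_q$ is nonempty and finite for every $q$. *)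

From HB Require Import structures.
From mathcomp Require Import all_boot all_order all_algebra.
From mathcomp Require Import all_classical all_reals all_analysis measurable_realfun.
From mathcomp Require Import finmap.
Set Implicit Arguments. Unset Strict Implicit. Unset Printing Implicit Defensive.
Import Order.TTheory GRing.Theory Num.Theory.
Import numFieldNormedType.Exports.
Local Open Scope classical_set_scope.
Local Open Scope ring_scope.

Section noise.
Variable R : realType.

Definition coord_sets : set (set (nat -> R)) :=
  [set (fun q : nat -> R => q n) @^-1` B | n in [set: nat] & B in measurable].

Definition Qspace := g_sigma_algebraType coord_sets.

(* P is the product measure lambda^N of Lebesgue measure on [0,1]:
   it is characterised (uniquely, by the pi-lambda theorem) by its values on
   finite-dimensional measurable rectangles *)
Definition is_noise_law (P : probability Qspace R) : Prop :=
  forall (n : nat) (B : 'I_n -> set R), (forall i, measurable (B i)) ->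
    P [set q : Qspace | forall i : 'I_n, B i (q i)] =
    (\prod_(i < n) (@lebesgue_measure R) (B i `&` `[0%R, 1%R]))%E.

Definition shift (q : nat -> R) : nat -> R := fun n => q n.+1.

Definition fstep (g1 g2 : R) (q : nat -> R) (x : nat) : nat :=
  if q 0%N < g1 / (g1 + g2 * x%:R) then x.+1 else x.-1.

Fixpoint phi (g1 g2 : R) (n : nat) (q : nat -> R) (x : nat) : nat :=
  match n with
  | 0%N => x
  | m.+1 => fstep g1 g2 (iter m shift q) (phi g1 g2 m q x)
  end.

(* d(x, K) = inf_{y in K} |x - y| (in the extended reals; +oo if K empty) *)
Definition distE (x : nat) (K : set nat) : \bar R :=
  ereal_inf [set ((`|x%:R - y%:R|)%:E : \bar R) | y in K].

Definition random_set (K : Qspace -> set nat) : Prop :=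
  forall x : nat, measurable_fun [set: Qspace] (fun q => distE x (K q)).

Definition finite_random_set (K : Qspace -> set nat) : Prop :=
  random_set K /\ forall q, K q !=set0 /\ finite_set (K q).

(* W_0 = even numbers (b = false), W_1 = odd numbers (b = true) *)
Definition W (b : bool) : set nat := [set x | odd x = b].

Definition ncard (A : set nat) : nat := #|` fset_set A|.

End noise.

From Pilot Require Import Defs.
From HB Require Import structures.
From mathcomp Require Import all_boot all_order all_algebra.
From mathcomp Require Import all_classical all_reals all_analysis measurable_realfun.
From mathcomp Require Import finmap.
From mathcomp Require Import ring lra.
Import Order.TTheory GRing.Theory Num.Theory.
Import numFieldNormedType.Exports.
Set Implicit Arguments.
Unset Strict Implicit.
Unset Printing Implicit Defensive.

Local Open Scope classical_set_scope.
Local Open Scope ring_scope.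

(** Two points driven by the same noise move by [+1] or [-1] at every step, so
    a pair [x < y] with an even gap either stays ordered or meets, and once met
    it stays together.  By the Markov property of the product measure, the
    probability [h x y] that such a pair never meets satisfies
      [h x y = t y * h x.+1 y.+1 + (t x - t y) * h x.+1 y.-1
               + (1 - t x) * h x.-1 y.-1],
    where [t x = g1 / (g1 + g2 * x)] is the probability of a step up.  Below a
    level [L] the pair meets with probability at least [p ^+ L], [p = 1 - t 1],
    while above [L], where [t <= 1/6], the function [2 ^+ y] is a strict
    supermartingale.  A maximum principle combining both facts gives
    [sup h <= (1 - p ^+ L) * sup h], hence [h = 0].  As [K q] is finite and almost
    surely inside one parity class, almost surely all its points eventually
    merge, and the events [#(phi n q @` K q) <> 1] decrease to a null set. *)

Lemma measurable_if d (T : measurableType d) (c : T -> bool) (A B : set T) :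
  measurable [set x | c x] -> measurable A -> measurable B ->
  measurable [set x | if c x then A x else B x].
Proof.
move=> mc mA mB.
have -> : [set x | if c x then A x else B x] =
    ([set x | c x] `&` A) `|` (~` [set x | c x] `&` B).
  apply/seteqP; split => x /=; case: (c x) => /=; try by [left|right].
  - by case=> -[].
  - by case=> -[].
by apply: measurableU; apply: measurableI => //; exact: measurableC.
Qed.

Lemma measureU3 d (T : measurableType d) (R : realType)
    (mu : {measure set T -> \bar R}) (A B C : set T) :
  measurable A -> measurable B -> measurable C ->
  A `&` B = set0 -> A `&` C = set0 -> B `&` C = set0 ->
  mu (A `|` B `|` C) = (mu A + mu B + mu C)%E.
Proof.
move=> mA mB mC AB AC BC; rewrite measureU ?measureU //; last 2 first.
- exact: measurableU.
- by rewrite setIUl AC BC setU0.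
Qed.

Lemma climb_unbounded (R : realType) (A : Type) (S : A -> Prop) (f : A -> R) (c : R) a0 :
  0 < c -> S a0 -> 0 < f a0 ->
  (forall a, S a -> 0 < f a -> exists2 b, S b & f a + c <= f b) ->
  forall B, exists2 a, S a & B < f a.
Proof.
move=> c_gt0 Sa0 fa0_gt0 climb.
have climb_k (k : nat) : exists2 a, S a & f a0 + k%:R * c <= f a.
  elim: k => [|k [a Sa fa]]; first by exists a0; rewrite ?mul0r ?addr0.
  have kc_ge0 : 0 <= k%:R * c by rewrite mulr_ge0 // ltW.
  have [|b Sb fb] := climb a Sa; first lra.
  by exists b => //; rewrite -natr1 mulrDl mul1r; lra.
move=> B; have Bc_ge0 : 0 <= `|B - f a0| / c by rewrite divr_ge0 // ltW.
have [a Sa fa] := climb_k (Num.Def.archi_bound (`|B - f a0| / c)).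
exists a => //; move: (archi_boundP Bc_ge0); rewrite ltr_pdivrMr // => Bk.
have := ler_norm (B - f a0); lra.
Qed.

Lemma convex3_ge (R : realFieldType) (a b c u v w z : R) :
  0 < a -> 0 <= b -> 0 <= c -> a + b + c = 1 -> z <= a * u + b * v + c * w ->
  [\/ z <= u, z <= v | 0 < c /\ z <= w].
Proof.
move=> a0 b0 c0 abc zle.
have [zu|uz] := lerP z u; first exact: Or31.
have [zv|vz] := lerP z v; first exact: Or32.
have au : a * u < a * z by rewrite ltr_pM2l.
have bv : b * v <= b * z by rewrite ler_wpM2l // ltW.
have zE : z = a * z + b * z + c * z by rewrite -!mulrDl abc mul1r.
apply: Or33; split.
  rewrite lt_neqAle c0 andbT; apply/eqP => c_eq0.
  by rewrite -c_eq0 !mul0r !addr0 in zle zE; lra.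
rewrite leNgt; apply/negP => wz.
have cw : c * w <= c * z by rewrite ler_wpM2l // ltW.
lra.
Qed.

Lemma geometric_bound_le0 (R : realType) (a k : R) : 0 <= k -> k < 1 ->
  (forall j, a <= k ^+ j) -> a <= 0.
Proof.
move=> k0 k1 ak; apply: (cvgr_to_ge (@cvg_expr _ k _)); last exact: nearW.
by rewrite ger0_norm.
Qed.

Lemma near_forall_finite (T : Type) (F : set_system T) (I : choiceType) (A : set I)
    (f : I -> set T) : Filter F -> finite_set A ->
  (forall i, A i -> \forall x \near F, f i x) -> \forall x \near F, forall i, A i -> f i x.
Proof.
move=> FF /finite_fsetP[X ->] Af.
apply: filterS (filter_bigI (f := f) (D := X) _ _) => //= x fx i Xi.
exact: fx.
Qed.

Lemma natr_dist_ge1 (R : realDomainType) (x y : nat) : x != y -> 1 <= `|x%:R - y%:R| :> R.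
Proof.
case: (ltngtP x y) => [xy|yx|->]; rewrite ?eqxx // => _.
  have xy' := ltnW xy.
  by rewrite distrC ger0_norm ?subr_ge0 ?ler_nat // -natrB // ler1n subn_gt0.
have yx' := ltnW yx.
by rewrite ger0_norm ?subr_ge0 ?ler_nat // -natrB // ler1n subn_gt0.
Qed.

Section noise_space.
Variable R : realType.
Local Notation Q := (Qspace R).
Local Notation sh := (@Defs.shift R : Q -> Q).

Lemma measurable_coord (n : nat) (B : set R) :
  measurable B -> measurable [set q : Q | B (q n)].
Proof. by move=> mB; apply: sub_sigma_algebra; exists n => //; exists B. Qed.

Lemma measurable_shift : measurable_fun [set: Q] sh.
Proof.
apply: (@measurability _ _ Q Q setT sh (@coord_sets R)) => //.
move=> _ [_ [n _ [B mB <-]] <-].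
by rewrite setTI; apply: sub_sigma_algebra; exists n.+1 => //; exists B.
Qed.

Lemma measurable_preimage_shift (C : set Q) : measurable C -> measurable (sh @^-1` C).
Proof. by move=> mC; rewrite -[X in measurable X]setTI; exact: measurable_shift. Qed.

Variables g1 g2 : R.
Local Notation phi := (phi g1 g2).
Local Notation fstep := (fstep g1 g2).

Lemma phiS n (q : Q) x : phi n.+1 q x = phi n (sh q) (fstep q x).
Proof.
elim: n x => [//|n IH] x.
by rewrite -[LHS]/(fstep (iter n.+1 sh q) (phi n.+1 q x)) IH iterSr.
Qed.

Lemma phi_merged (q : Q) x y n k : phi n q x = phi n q y -> (n <= k)%N ->
  phi k q x = phi k q y.
Proof.
move=> e /subnK <-; elim: (k - n)%N => [//|j IH].
by rewrite addSn /= IH.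
Qed.

Arguments Defs.phi : simpl never.

Lemma measurable_phi_eq n x z : measurable [set q : Q | phi n q x = z].
Proof.
elim: n x => [|n IH] x.
  have [->|nxz] := eqVneq x z.
    by rewrite (_ : [set _ | _] = setT) //; apply/seteqP; split.
  rewrite (_ : [set _ | _] = set0) //.
  by apply/seteqP; split => q // exz; rewrite -exz eqxx in nxz.
have -> : [set q : Q | phi n.+1 q x = z] =
    [set q | if q 0%N < g1 / (g1 + g2 * x%:R)
             then (sh @^-1` [set q : Q | phi n q x.+1 = z]) q
             else (sh @^-1` [set q : Q | phi n q x.-1 = z]) q].
  by apply/seteqP; split => q /=; rewrite phiS /Defs.fstep; case: ifP.
apply: measurable_if; last 2 first.
- exact: measurable_preimage_shift.
- exact: measurable_preimage_shift.
rewrite (_ : [set q | _] = [set q : Q | `]-oo, g1 / (g1 + g2 * x%:R)[%classic (q 0%N)]).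
  exact: measurable_coord (measurable_itv _).
by apply/seteqP; split => q /=; rewrite in_itv.
Qed.

Lemma measurable_phi_neq n x y : measurable [set q : Q | phi n q x != phi n q y].
Proof.
have -> : [set q : Q | phi n q x != phi n q y] =
    \bigcup_z ([set q : Q | phi n q x = z] `&` ~` [set q : Q | phi n q y = z]).
  apply/seteqP; split => q /=.
    by move=> nxy; exists (phi n q x) => //; split => //= exy; rewrite exy eqxx in nxy.
  by case=> z _ [/= -> nyz]; apply/eqP => ezy; apply: nyz.
apply: bigcupT_measurable => z.
by apply: measurableI; [|apply: measurableC]; exact: measurable_phi_eq.
Qed.

End noise_space.

Section cylinders.
Variable R : realType.
Local Notation Q := (Qspace R).

Definition cylinder n (B : nat -> set R) : set Q :=
  [set q : Q | forall i, (i < n)%N -> B i (q i)].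

Definition cylinders : set (set Q) :=
  [set C | exists n (B : nat -> set R), (forall i, measurable (B i)) /\ C = cylinder n B].

Lemma measurable_cylinder n B : (forall i, measurable (B i)) -> measurable (cylinder n B).
Proof.
move=> mB; have -> : cylinder n B = \bigcap_(i in `I_n) [set q : Q | B i (q i)].
  by apply/seteqP; split => q /= Bq i; apply: Bq.
by apply: bigcap_measurableType => i _; exact: measurable_coord.
Qed.

Lemma cylinders_generate : @measurable _ Q = <<s cylinders >>.
Proof.
apply/seteqP; split.
- apply: smallest_sub; first exact: smallest_sigma_algebra.
  move=> _ [n _ [B mB <-]]; apply: sub_sigma_algebra.
  exists n.+1, (fun i => if i == n then B else setT); split.
    by move=> i; case: ifP.
  apply/seteqP; split => q /=.
    by move=> Bq i _; case: eqP => // ->.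
  by move=> /(_ n (ltnSn n)); rewrite eqxx.
- apply: smallest_sub; first exact: sigma_algebra_measurable.
  by move=> _ [n [B [mB ->]]]; exact: measurable_cylinder.
Qed.

Lemma cylinders_setI_closed : setI_closed cylinders.
Proof.
move=> _ _ [n [B [mB ->]]] [m [C [mC ->]]].
exists (maxn n m), (fun i => (if (i < n)%N then B i else setT) `&`
                            (if (i < m)%N then C i else setT)); split.
  by move=> i; apply: measurableI; case: ifP.
apply/seteqP; split => q /=.
  by move=> [Bq Cq] i _; split; case: ifP => // i_lt; [exact: Bq|exact: Cq].
move=> BCq; split => i i_lt.
  by have := BCq i (leq_trans i_lt (leq_maxl n m)); rewrite i_lt => -[].
by have := BCq i (leq_trans i_lt (leq_maxr n m)); rewrite i_lt => -[].
Qed.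

Lemma measure_unique_cylinders (m1 m2 : {measure set Q -> \bar R}) :
  (m1 setT < +oo)%E ->
  (forall n B, (forall i, measurable (B i)) -> m1 (cylinder n B) = m2 (cylinder n B)) ->
  forall C, measurable C -> m1 C = m2 C.
Proof.
move=> m1T m1m2; apply: (measure_unique cylinders (fun=> setT)).
- exact: cylinders_generate.
- exact: cylinders_setI_closed.
- move=> _; exists 0%N, (fun=> setT); split => //.
  by apply/seteqP; split => q.
- by rewrite bigcup_const.
- by move=> _ [n [B [mB ->]]]; exact: m1m2.
- by [].
Qed.

End cylinders.

Section noise_law.
Variable R : realType.
Local Notation Q := (Qspace R).
Local Notation sh := (@Defs.shift R : Q -> Q).
Local Notation leb := (@lebesgue_measure R).

Lemma lebesgue_unit : leb `[0, 1]%classic = 1%E.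
Proof. by rewrite lebesgue_measure_itv /= lte_fin ltr01 oppr0 adde0. Qed.

Lemma lebesgue_setI_unit_le1 (I : set R) : measurable I -> (leb (I `&` `[0%R, 1%R]) <= 1)%E.
Proof.
move=> mI; rewrite -lebesgue_unit; apply: le_measure; rewrite ?inE.
- by apply/mem_set/measurableI => //; exact: measurable_itv.
- by apply/mem_set; exact: measurable_itv.
- exact: subIsetr.
Qed.

Variable P : probability Q R.
Hypothesis hP : is_noise_law P.

Lemma noise_law_cylinder n B : (forall i, measurable (B i)) ->
  P (cylinder n B) = (\prod_(i < n) leb (B i `&` `[0%R, 1%R]))%E.
Proof.
move=> mB; rewrite -hP //; congr (P _).
by apply/seteqP; split => q /= Bq i => [|i_lt]; [exact: Bq|exact: (Bq (Ordinal i_lt))].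
Qed.

Lemma noise_law_first_step (I : set R) (C : set Q) : measurable I -> measurable C ->
  P ([set q : Q | I (q 0%N)] `&` sh @^-1` C) = (leb (I `&` `[0%R, 1%R]) * P C)%E.
Proof.
move=> mI mC; have mI0 := measurable_coord 0 mI.
set c := leb (I `&` `[0, 1]).
have c_ge0 : (0 <= c)%E by exact: measure_ge0.
have cE : c = (fine c)%:E.
  by rewrite fineK // ge0_fin_numE // (le_lt_trans (lebesgue_setI_unit_le1 mI)) ?ltry.
pose m1 := measure_function_pushforward__canonical__measure_function_Measure
   (mrestr P mI0) (@measurable_shift R).
pose m2 := mscale (NngNum (fine_ge0 c_ge0)) P.
have m1m2 : m1 C = m2 C.
  apply: measure_unique_cylinders => // [|n B mB].
    apply: le_lt_trans (probability_le1 _ _) (ltry _) => //.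
    by apply: measurableI => //; exact: measurable_preimage_shift.
  rewrite /m1 /m2 /= /pushforward /mrestr /mscale /= -cE.
  have -> : (sh @^-1` cylinder n B) `&` [set q : Q | I (q 0%N)] =
      cylinder n.+1 (fun i => if i is k.+1 then B k else I).
    apply/seteqP; split => q /=.
      by move=> [Bq Iq] [|i] i_lt //=; exact: Bq.
    by move=> BIq; split => [i i_lt|]; [exact: (BIq i.+1)|exact: (BIq 0%N)].
  by rewrite !noise_law_cylinder //; [rewrite big_ord_recl|case].
by move: m1m2; rewrite /m1 /m2 /= /pushforward /mrestr /mscale /= -cE setIC.
Qed.

End noise_law.

Section lebesgue_unit_interval.
Variable R : realType.
Local Notation leb := (@lebesgue_measure R).

Lemma lebesgue_unit_Nyo (a : R) : 0 <= a -> a <= 1 ->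
  leb (`]-oo, a[ `&` `[0, 1]) = a%:E.
Proof.
move=> a0 a1; have -> : `]-oo, a[ `&` `[0, 1] = `[0, a[%classic.
  apply/seteqP; split => r /=; rewrite !in_itv /=.
    by case=> ra /andP[r0 _]; rewrite r0 ra.
  by case/andP => r0 ra; rewrite r0 (le_trans (ltW ra) a1).
rewrite lebesgue_measure_itv /= lte_fin oppr0 adde0.
by case: ifPn => // /negbTE; rewrite lt_neqAle a0 andbT => /negbFE/eqP <-.
Qed.

Lemma lebesgue_unit_co (a b : R) : 0 <= a -> a <= b -> b <= 1 ->
  leb (`[a, b[ `&` `[0, 1]) = (b - a)%:E.
Proof.
move=> a0 ab b1; have -> : `[a, b[ `&` `[0, 1] = `[a, b[%classic.
  apply/seteqP; split => r /=; rewrite !in_itv /=; first by case.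
  by case/andP => ar rb; rewrite ar rb (le_trans a0 ar) (le_trans (ltW rb) b1).
rewrite lebesgue_measure_itv /= lte_fin -EFinD.
by case: ifPn => // /negbTE; rewrite lt_neqAle ab andbT => /negbFE/eqP <-; rewrite subrr.
Qed.

Lemma lebesgue_unit_cy (b : R) : 0 <= b -> b <= 1 ->
  leb (`[b, +oo[ `&` `[0, 1]) = (1 - b)%:E.
Proof.
move=> b0 b1; have -> : `[b, +oo[ `&` `[0, 1] = `[b, 1]%classic.
  apply/seteqP; split => r /=; rewrite !in_itv /= andbT.
    by case=> -> /andP[_ ->].
  by case/andP => br r1; rewrite br (le_trans b0 br) r1.
rewrite lebesgue_measure_itv /= lte_fin -EFinD.
by case: ifPn => // /negbTE; rewrite lt_neqAle b1 andbT => /negbFE/eqP <-; rewrite subrr.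
Qed.

End lebesgue_unit_interval.

Section coupling.
Variable R : realType.
Local Notation Q := (Qspace R).
Local Notation sh := (@Defs.shift R : Q -> Q).
Variables g1 g2 : R.
Hypotheses (g1_gt0 : 0 < g1) (g2_gt0 : 0 < g2).
Local Notation phi := (phi g1 g2).
Local Notation fstep := (fstep g1 g2).

Definition birth_prob (x : nat) : R := g1 / (g1 + g2 * x%:R).

Let denom_gt0 x : 0 < g1 + g2 * x%:R.
Proof. by rewrite ltr_wpDr // mulr_ge0 // ltW. Qed.

Lemma birth_prob_gt0 x : 0 < birth_prob x.
Proof. exact: divr_gt0. Qed.

Lemma birth_prob0 : birth_prob 0 = 1.
Proof. by rewrite /birth_prob mulr0 addr0 divff // gt_eqF. Qed.

Lemma birth_prob_le1 x : birth_prob x <= 1.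
Proof. by rewrite /birth_prob ler_pdivrMr // mul1r lerDl mulr_ge0 // ltW. Qed.

Lemma birth_prob_decr x y : (x < y)%N -> birth_prob y < birth_prob x.
Proof.
move=> xy; rewrite /birth_prob ltr_pM2l // ltf_pV2 ?posrE //.
by rewrite ltrD2l ltr_pM2l // ltr_nat.
Qed.

Lemma birth_prob_small c : 0 < c -> exists L, forall y, (L < y)%N -> birth_prob y <= c.
Proof.
move=> c_gt0; have b0 : 0 <= g1 / (c * g2) by rewrite divr_ge0 ?mulr_ge0 // ltW.
exists (Num.Def.archi_bound (g1 / (c * g2))) => y Ly.
have yb : g1 / (c * g2) < y%:R.
  apply: lt_le_trans (archi_boundP b0) _; rewrite ler_nat; exact: ltnW.
rewrite /birth_prob ler_pdivrMr // mulrDr mulrA.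
move: yb; rewrite ltr_pdivrMr ?mulr_gt0 // => yb.
apply: ler_wpDl; first by rewrite mulr_ge0 // ltW.
by rewrite mulrC ltW.
Qed.

Definition never_meet x y : set Q := [set q | forall n, phi n q x != phi n q y].

Lemma measurable_never_meet x y : measurable (never_meet x y).
Proof.
have -> : never_meet x y = \bigcap_n [set q : Q | phi n q x != phi n q y].
  by apply/seteqP; split => q /= nxy n; [move=> _|]; apply: nxy.
by apply: bigcapT_measurable => n; exact: measurable_phi_neq.
Qed.

Lemma never_meet_diag x : never_meet x x = set0.
Proof. by apply/seteqP; split => q // /(_ 0%N); rewrite eqxx. Qed.

Lemma never_meetC x y : never_meet x y = never_meet y x.
Proof. by apply/seteqP; split => q nxy n; rewrite eq_sym. Qed.

Lemma never_meetS x y (q : Q) :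
  never_meet x y q <-> x != y /\ never_meet (fstep q x) (fstep q y) (sh q).
Proof.
split => [nxy|[nxy nxy'] [|n] //]; last by rewrite !phiS; exact: nxy'.
by split => [|n]; [exact: (nxy 0%N)|rewrite -!phiS; exact: nxy].
Qed.

(* With the common noise, [x < y] both move up when [q 0 < birth_prob y], move
   towards each other when [birth_prob y <= q 0 < birth_prob x], and both move
   down otherwise. *)
Lemma never_meet_split x y : (x < y)%N ->
  never_meet x y =
     [set q : Q | `]-oo, birth_prob y[%classic (q 0%N)] `&` sh @^-1` never_meet x.+1 y.+1
  `|` [set q : Q | `[birth_prob y, birth_prob x[%classic (q 0%N)] `&` sh @^-1` never_meet x.+1 y.-1
  `|` [set q : Q | `[birth_prob x, +oo[%classic (q 0%N)] `&` sh @^-1` never_meet x.-1 y.-1.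
Proof.
move=> xy; have bxy := birth_prob_decr xy.
have nxy : x != y by rewrite neq_ltn xy.
apply/seteqP; split => q /=; rewrite !in_itv /= ?andbT.
  move=> /never_meetS [_]; rewrite /Defs.fstep -!/(birth_prob _).
  have [q_lt_y|_] := ltP (q 0%N) (birth_prob y).
    by rewrite (lt_trans q_lt_y bxy) => ?; left; left.
  by case: ltP => q_x ?; [left; right|right].
move=> pieces; apply/never_meetS; split => //; rewrite /Defs.fstep -!/(birth_prob _).
case: pieces => [[[q_y ?]|[/andP[y_q q_x] ?]]|[x_q ?]].
- by rewrite q_y (lt_trans q_y bxy).
- by rewrite q_x ltNge y_q.
- by rewrite !ltNge x_q (le_trans (ltW bxy) x_q).
Qed.

End coupling.

Section never_meet_probability.
Variable R : realType.
Local Notation Q := (Qspace R).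
Variable P : probability Q R.
Hypothesis hP : is_noise_law P.
Variables g1 g2 : R.
Hypotheses (g1_gt0 : 0 < g1) (g2_gt0 : 0 < g2).
Local Notation bp := (birth_prob g1 g2).

Definition never_meet_prob x y : R := fine (P (never_meet g1 g2 x y)).

Lemma never_meet_probE x y : P (never_meet g1 g2 x y) = (never_meet_prob x y)%:E.
Proof. by rewrite fineK // fin_num_measure //; exact: measurable_never_meet. Qed.

Lemma never_meet_prob_ge0 x y : 0 <= never_meet_prob x y.
Proof. exact: fine_ge0. Qed.

Lemma never_meet_prob_le1 x y : never_meet_prob x y <= 1.
Proof.
by rewrite -lee_fin -never_meet_probE probability_le1 //; exact: measurable_never_meet.
Qed.

Lemma never_meet_prob_diag x : never_meet_prob x x = 0.
Proof. by rewrite /never_meet_prob never_meet_diag measure0. Qed.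

Let coord0_disjoint (I J : set R) (X Y : set Q) : I `&` J = set0 ->
  ([set q : Q | I (q 0%N)] `&` X) `&` ([set q : Q | J (q 0%N)] `&` Y) = set0.
Proof.
move=> IJ; apply/seteqP; split => q // [[Iq _] [Jq _]].
by have : (I `&` J) (q 0%N) by []; rewrite IJ.
Qed.

Lemma never_meet_prob_rec x y : (x < y)%N ->
  never_meet_prob x y = bp y * never_meet_prob x.+1 y.+1
    + (bp x - bp y) * never_meet_prob x.+1 y.-1 + (1 - bp x) * never_meet_prob x.-1 y.-1.
Proof.
move=> xy; apply: EFin_inj; rewrite !EFinD (EFinM (bp y)) (EFinM (bp x - bp y)) (EFinM (1 - bp x)).
rewrite -!never_meet_probE.
have bx0 := birth_prob_gt0 g1_gt0 g2_gt0 x; have bx1 := birth_prob_le1 g1_gt0 g2_gt0 x.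
have by0 := birth_prob_gt0 g1_gt0 g2_gt0 y; have by1 := birth_prob_le1 g1_gt0 g2_gt0 y.
have bxy := birth_prob_decr g1_gt0 g2_gt0 xy.
have m_step (I : interval R) x' y' : measurable
    ([set q : Q | [set` I] (q 0%N)] `&` (@Defs.shift R : Q -> Q) @^-1` never_meet g1 g2 x' y').
  apply: measurableI; first exact: measurable_coord (measurable_itv _).
  exact: measurable_preimage_shift (measurable_never_meet _ _ _ _).
rewrite never_meet_split // measureU3; try exact: m_step; last 3 first.
- apply: coord0_disjoint; apply/seteqP; split => r //=; rewrite !in_itv /=.
  by case=> r_y /andP[y_r _]; move: (lt_le_trans r_y y_r); rewrite ltxx.
- apply: coord0_disjoint; apply/seteqP; split => r //=; rewrite !in_itv /=.
  by case=> r_y /andP[x_r _]; move: (lt_le_trans r_y (le_trans (ltW bxy) x_r)); rewrite ltxx.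
- apply: coord0_disjoint; apply/seteqP; split => r //=; rewrite !in_itv /=.
  by case=> /andP[_ r_x] /andP[x_r _]; move: (lt_le_trans r_x x_r); rewrite ltxx.
congr (_ + _ + _); apply: eq_trans (noise_law_first_step hP (measurable_itv _)
  (measurable_never_meet _ _ _ _)) _; congr (_ * _)%E.
- by rewrite lebesgue_unit_Nyo // ltW.
- by rewrite lebesgue_unit_co // ltW.
- by rewrite lebesgue_unit_cy // ltW.
Qed.

End never_meet_probability.

Definition even_gap (x y : nat) := (x <= y)%N && (odd x == odd y).

Lemma even_gap_up x y : even_gap x y -> even_gap x.+1 y.+1.
Proof. by rewrite /even_gap ltnS /=; case: (odd x); case: (odd y). Qed.

Lemma even_gap_cross x y : even_gap x y -> (x < y)%N -> even_gap x.+1 y.-1.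
Proof.
case: y => // -[|y] /andP[_ /eqP]; first by case: x.
rewrite /even_gap /= => oxy; rewrite ltnS leq_eqVlt => /orP[/eqP exy|xy].
  by rewrite exy /= in oxy; case: (odd y) oxy.
by rewrite xy /=; case: (odd x) oxy; case: (odd y).
Qed.

Lemma even_gap_down x y : even_gap x y -> (0 < x)%N -> even_gap x.-1 y.-1.
Proof.
case: x => // x; case: y => // y; rewrite /even_gap ltnS /= => /andP[-> /eqP].
by case: (odd x); case: (odd y).
Qed.

Section maximum_principle.
Variable R : realType.
Variables (t : nat -> R) (h : nat -> nat -> R).
Hypotheses (t0 : t 0%N = 1) (t_gt0 : forall x, 0 < t x)
  (t_decr : forall x y, (x < y)%N -> t y < t x).
Hypotheses (h_ge0 : forall x y, 0 <= h x y) (h_le1 : forall x y, h x y <= 1)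
  (h_diag : forall x, h x x = 0)
  (h_rec : forall x y, (x < y)%N -> h x y = t y * h x.+1 y.+1
      + (t x - t y) * h x.+1 y.-1 + (1 - t x) * h x.-1 y.-1).
Variable L : nat.
Hypothesis t_small : forall y, (L < y)%N -> t y <= 6^-1.

Let t_le1 x : t x <= 1.
Proof. by case: x => [|x]; [rewrite t0|rewrite -t0 ltW // t_decr]. Qed.

Let t_nincr x y : (x <= y)%N -> t y <= t x.
Proof. by rewrite leq_eqVlt => /orP[/eqP->//|xy]; exact/ltW/t_decr. Qed.

Let p := 1 - t 1.

Let p_gt0 : 0 < p.
Proof. by rewrite subr_gt0 -t0 t_decr. Qed.

Let p_le1 : p <= 1.
Proof. by rewrite lerBlDr lerDl ltW. Qed.

Let p_le x : (0 < x)%N -> p <= 1 - t x.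
Proof. by move=> x0; rewrite lerB // t_nincr. Qed.

Let th := 1 - p ^+ L.

Let th_ge0 : 0 <= th.
Proof. by rewrite subr_ge0 exprn_ile1 // ltW. Qed.

Let th_lt1 : th < 1.
Proof. by rewrite ltrBlDr ltrDl exprn_gt0. Qed.

Section bounded_by.
Variable M : R.
Hypotheses (M_ge0 : 0 <= M) (h_leM : forall x y, even_gap x y -> h x y <= M).

(* Each step closes the gap with probability at least [p] (both points move
   down, or towards each other when [x = 0]), and [y] such steps force a meeting. *)
Lemma escape_bound y x : even_gap x y -> h x y <= M * (1 - p ^+ y).
Proof.
elim: y x => [|y IH] x xy.
  by move: xy => /andP[]; rewrite leqn0 => /eqP-> _; rewrite h_diag expr0 subrr mulr0.
have [->|nx] := eqVneq x y.+1.
  by rewrite h_diag mulr_ge0 // subr_ge0 exprn_ile1 // ltW.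
have x_lt : (x < y.+1)%N by rewrite ltn_neqAle nx; case/andP: xy.
have Mp_ge0 : 0 <= M * p ^+ y by rewrite mulr_ge0 // exprn_ge0 // ltW.
have py_ge0 := exprn_ge0 y (ltW p_gt0); have py_le1 := exprn_ile1 y (ltW p_gt0) p_le1.
have := p_gt0; have := p_le1.
have hA := h_leM (even_gap_up xy); have hB := h_leM (even_gap_cross xy x_lt).
have ty := t_gt0 y.+1; have txy := t_decr x_lt.
rewrite h_rec //= exprS.
case: x xy nx x_lt txy hA hB => [|x] xy nx x_lt txy hA hB.
  have IHB := IH _ (even_gap_cross xy x_lt); have py := p_le (ltn0Sn y).
  rewrite t0 subrr mul0r addr0; have := h_ge0 1 y; have := h_ge0 1 y.+2; nra.
have IHC := IH _ (even_gap_down xy (ltn0Sn x)); have px := p_le (ltn0Sn x).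
have := t_le1 x.+1; have := h_ge0 x y; have := h_ge0 x.+2 y; have := h_ge0 x.+2 y.+2.
nra.
Qed.

Section climbing.
Variable eps : R.
Hypothesis eps_gt0 : 0 < eps.

(* If [h x y > th * M + eps * 2 ^+ y] somewhere, [D] would climb by [eps / 2]
   along even-gap pairs forever, contradicting [D <= h <= 1]. *)
Let D x y := h x y - th * M - eps * 2 ^+ y.

Let D_rec x y : (x < y.+1)%N ->
  t y.+1 * D x.+1 y.+2 + (t x - t y.+1) * D x.+1 y + (1 - t x) * D x.-1 y
  = D x y.+1 + eps * 2 ^+ y * (1 - 3 * t y.+1).
Proof. by move=> x_lt; rewrite /D (h_rec x_lt) /= !exprS; ring. Qed.

Let D_climb x y : even_gap x y -> 0 < D x y ->
  exists2 xy' : nat * nat, even_gap xy'.1 xy'.2 & D x y + eps / 2 <= D xy'.1 xy'.2.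
Proof.
move=> xy D_gt0; have eps2_gt0 : 0 < eps * 2 ^+ y by rewrite mulr_gt0 // exprn_gt0.
have L_lt : (L < y)%N.
  rewrite ltnNge; apply/negP => yL.
  have : M * (1 - p ^+ y) <= th * M.
    by rewrite mulrC ler_wpM2r // lerB // ler_wiXn2l // ltW.
  by have := escape_bound xy; rewrite /D in D_gt0; lra.
have x_lt : (x < y)%N.
  rewrite ltn_neqAle (andP xy).1 andbT; apply: contraTneq D_gt0 => ->.
  by rewrite /D h_diag -leNgt; have := mulr_ge0 th_ge0 M_ge0; lra.
case: y xy D_gt0 eps2_gt0 L_lt x_lt => // y xy D_gt0 _ L_lt x_lt.
have eps2_gt0 : 0 < eps * 2 ^+ y by rewrite mulr_gt0 // exprn_gt0.
have gain : eps / 2 <= eps * 2 ^+ y * (1 - 3 * t y.+1).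
  have : eps <= eps * 2 ^+ y by rewrite ler_peMr ?(ltW eps_gt0) // exprn_ege1 // ler1n.
  have : 2^-1 <= 1 - 3 * t y.+1 by have := t_small L_lt; lra.
  move/(ler_wpM2l (ltW eps2_gt0)); lra.
have a_gt0 := t_gt0 y.+1.
have b_ge0 : 0 <= t x - t y.+1 by rewrite subr_ge0 ltW // t_decr.
have c_ge0 : 0 <= 1 - t x by rewrite subr_ge0.
have w1 : t y.+1 + (t x - t y.+1) + (1 - t x) = 1 by ring.
have comb : D x y.+1 + eps / 2 <=
    t y.+1 * D x.+1 y.+2 + (t x - t y.+1) * D x.+1 y + (1 - t x) * D x.-1 y.
  by rewrite D_rec //; lra.
have [up|cross|[c_gt0 down]] := convex3_ge a_gt0 b_ge0 c_ge0 w1 comb.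
- by exists (x.+1, y.+2) => //; exact: even_gap_up.
- by exists (x.+1, y) => //; exact: (even_gap_cross xy).
- exists (x.-1, y) => //; apply: (even_gap_down xy).
  by rewrite lt0n; apply: contraTneq c_gt0 => ->; rewrite t0 subrr ltxx.
Qed.

Lemma contract_bound_eps x y : even_gap x y -> h x y <= th * M + eps * 2 ^+ y.
Proof.
move=> xy; rewrite leNgt; apply/negP => h_gt.
have D_gt0 : 0 < D x y by rewrite /D; lra.
have eps2_gt0 : 0 < eps / 2 by rewrite divr_gt0.
have [[x' y'] xy' D_gt1] := climb_unbounded (f := fun xy => D xy.1 xy.2)
  (S := fun xy => even_gap xy.1 xy.2) (a0 := (x, y)) eps2_gt0
  xy D_gt0 (fun xy' => @D_climb xy'.1 xy'.2) 1.
have := h_le1 x' y'; have := mulr_ge0 th_ge0 M_ge0.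
have : 0 <= eps * 2 ^+ y' by rewrite mulr_ge0 ?exprn_ge0 // ltW.
by rewrite /D /= in D_gt1; lra.
Qed.

End climbing.

Lemma contract_bound x y : even_gap x y -> h x y <= th * M.
Proof.
move=> xy; apply/ler_addgt0Pr => e e_gt0.
have two_y_gt0 : 0 < 2 ^+ y :> R by rewrite exprn_gt0.
have := contract_bound_eps (divr_gt0 e_gt0 two_y_gt0) xy.
by rewrite divfK // gt_eqF.
Qed.

End bounded_by.

Lemma even_gap_eq0 x y : even_gap x y -> h x y = 0.
Proof.
move=> xy; apply/eqP; rewrite eq_le h_ge0 andbT.
apply: (geometric_bound_le0 th_ge0 th_lt1) => j; move: x y xy.
elim: j => [|j IH] x y xy; first by rewrite expr0.
by rewrite exprS; apply: contract_bound => //; exact: exprn_ge0.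
Qed.

End maximum_principle.

Lemma never_meet_null (R : realType) (P : probability (Qspace R) R) (g1 g2 : R) x y :
  is_noise_law P -> 0 < g1 -> 0 < g2 -> even_gap x y -> P (never_meet g1 g2 x y) = 0%E.
Proof.
move=> hP g1_gt0 g2_gt0 xy.
have [L small] : exists L, forall y, (L < y)%N -> birth_prob g1 g2 y <= 6^-1.
  by apply: birth_prob_small => //; rewrite invr_gt0.
by rewrite never_meet_probE (even_gap_eq0 (birth_prob0 g2 g1_gt0) (birth_prob_gt0 g1_gt0 g2_gt0)
  (birth_prob_decr g1_gt0 g2_gt0) (never_meet_prob_ge0 P g1 g2)
  (never_meet_prob_le1 P g1 g2) (never_meet_prob_diag P g1 g2)
  (never_meet_prob_rec hP g1_gt0 g2_gt0) small xy).
Qed.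

Lemma distE_eq0 (R : realType) x (A : set nat) : distE R x A = 0%E <-> A x.
Proof.
split => [dx0|Ax].
  apply: contrapT => nAx.
  have : (1 <= distE R x A)%E.
    apply: le_ereal_inf_tmp => _ [y Ay <-]; rewrite lee_fin natr_dist_ge1 //.
    by apply/eqP => exy; apply: nAx; rewrite exy.
  by rewrite dx0 lee_fin ler10.
apply: le_anti; apply/andP; split.
  by apply: ereal_inf_lbound; exists x => //; rewrite subrr normr0.
by apply: le_ereal_inf_tmp => _ [y _ <-]; exact: normr_ge0.
Qed.

Section random_set_images.
Variable R : realType.
Local Notation Q := (Qspace R).
Variables g1 g2 : R.
Local Notation phi := (phi g1 g2).
Variable K : Q -> set nat.
Hypothesis K_random : random_set K.

Lemma measurable_random_set_mem x : measurable [set q : Q | K q x].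
Proof.
have -> : [set q : Q | K q x] = setT `&` ((fun q => distE R x (K q)) @^-1` [set 0%E]).
  by apply/seteqP; split => q /=; rewrite distE_eq0 // => -[].
exact: K_random x measurableT [set 0%E] (emeasurable_set1 0%E).
Qed.

Lemma measurable_image_mem n z : measurable [set q : Q | (phi n q @` K q) z].
Proof.
have -> : [set q : Q | (phi n q @` K q) z] =
    \bigcup_x ([set q : Q | K q x] `&` [set q : Q | phi n q x = z]).
  by apply/seteqP; split => q /= [x]; [move=> Kx ez; exists x|move=> _ [Kx ez]; exists x].
apply: bigcupT_measurable => x; apply: measurableI.
  exact: measurable_random_set_mem.
exact: measurable_phi_eq.
Qed.

Lemma measurable_image_eq n (F : {fset nat}) :
  measurable [set q : Q | phi n q @` K q = [set` F]].
Proof.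
have -> : [set q : Q | phi n q @` K q = [set` F]] =
    \bigcap_z (if z \in F then [set q : Q | (phi n q @` K q) z]
               else ~` [set q : Q | (phi n q @` K q) z]).
  apply/seteqP; split => q /= => [img z _|imgF].
    case: ifPn => zF; first by have : [set` F] z := zF; rewrite -img.
    move=> /= imgz; have : [set` F] z by rewrite -img.
    by rewrite /= (negbTE zF).
  apply/seteqP; split => z /=; have := imgF z Logic.I.
    by case: ifPn => // _ nimg imgz; exfalso; apply: nimg.
  by move=> + zF; rewrite zF.
apply: bigcapT_measurable => z; case: ifP => _; last apply: measurableC;
  exact: measurable_image_mem.
Qed.

Hypothesis K_fin : forall q, finite_set (K q).

Lemma measurable_ncard_image n (c : pred nat) :
  measurable [set q : Q | c (ncard (phi n q @` K q))].
Proof.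
have -> : [set q : Q | c (ncard (phi n q @` K q))] =
    \bigcup_(F : {fset nat}) (if c #|` F| then [set q : Q | phi n q @` K q = [set` F]]
                              else set0).
  apply/seteqP; split => q /=.
    move=> cq; exists (fset_set (phi n q @` K q)) => //.
    by rewrite cq fset_setK //; exact: finite_image.
  by move=> [F _]; case: ifP => // cF imgF; rewrite /ncard imgF set_fsetK.
apply: countable_bigcupT_measurable; first exact: countableP.
by move=> F; case: ifP => _; [exact: measurable_image_eq|exact: measurable0].
Qed.

End random_set_images.

Section merging.
Variable R : realType.
Local Notation Q := (Qspace R).
Variables g1 g2 : R.
Local Notation phi := (phi g1 g2).
Variable K : Q -> set nat.

Definition not_merged n : set Q :=
  [set q | exists x y, [/\ K q x, K q y & phi n q x != phi n q y]].

Lemma not_merged_nonincreasing : nonincreasing_seq not_merged.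
Proof.
move=> n m nm; apply/subsetPset => q [x [y [Kx Ky nxy]]]; exists x, y; split => //.
by apply: contra_neq nxy => exy; exact: phi_merged exy nm.
Qed.

Lemma measurable_not_merged n : random_set K -> measurable (not_merged n).
Proof.
move=> K_random; have -> : not_merged n = \bigcup_x \bigcup_y
    ([set q | K q x] `&` [set q | K q y] `&` [set q : Q | phi n q x != phi n q y]).
  apply/seteqP; split => q /=.
    by move=> [x [y [Kx Ky nxy]]]; exists x => //; exists y.
  by move=> [x _ [y _ [[Kx Ky] nxy]]]; exists x, y.
apply: bigcupT_measurable => x; apply: bigcupT_measurable => y.
apply: measurableI; last exact: measurable_phi_neq.
by apply: measurableI; exact: measurable_random_set_mem.
Qed.

Lemma ncard_image_neq1 n (c : R) (q : Q) : 0 < c -> K q !=set0 ->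
  c <= `|(ncard (phi n q @` K q))%:R - 1| -> not_merged n q.
Proof.
move=> c_gt0 [x0 Kx0] cq; apply: contrapT => merged.
have img : phi n q @` K q = [set phi n q x0].
  apply/seteqP; split => z /= => [[x Kx <-]|->]; last by exists x0.
  apply: contrapT => nxx0; apply: merged; exists x, x0; split => //.
  exact/eqP.
by move: cq; rewrite /ncard img fset_set1 cardfs1 subrr normr0 leNgt c_gt0.
Qed.

(* Finiteness of [K q] gives a common merging time for all its pairs. *)
Lemma never_merged_never_meet (q : Q) : finite_set (K q) ->
  (forall n, not_merged n q) -> exists x y, [/\ K q x, K q y & never_meet g1 g2 x y q].
Proof.
move=> K_fin unmerged; apply: contrapT => all_meet.
have meet xy : (K q `*` K q) xy -> \forall n \near \oo, phi n q xy.1 = phi n q xy.2.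
  case: xy => x y [/= Kx Ky]; have [n exy] : exists n, phi n q x = phi n q y.
    apply: contrapT => nxy; apply: all_meet; exists x, y; split => // n.
    by apply/eqP => exy; apply: nxy; exists n.
  by exists n => // k; exact: phi_merged exy.
have [N _ merged] := near_forall_finite _ (finite_setX K_fin K_fin) meet.
have [x [y [Kx Ky]]] := unmerged N.
by rewrite (merged N (leqnn N) (x, y)) ?eqxx.
Qed.

End merging.

Lemma never_merged_null (R : realType) (P : probability (Qspace R) R) (g1 g2 : R)
    (K : Qspace R -> set nat) (b : bool) :
  is_noise_law P -> 0 < g1 -> 0 < g2 -> random_set K -> (forall q, finite_set (K q)) ->
  {ae P, forall q, K q `<=` W b} -> P (\bigcap_n not_merged g1 g2 K n) = 0%E.
Proof.
move=> hP g1_gt0 g2_gt0 K_random K_fin K_W.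
apply: measure_negligible.
  by apply: bigcapT_measurable => n; exact: measurable_not_merged.
have pairs_null : P.-negligible
    (\bigcup_x \bigcup_y (if even_gap x y then never_meet g1 g2 x y else set0)).
  apply: negligible_bigcup => x; apply: negligible_bigcup => y.
  case: ifP => xy; last exact: negligible_set0.
  apply/negligibleP; first exact: measurable_never_meet.
  exact: never_meet_null.
apply: (negligibleS _ (negligibleU K_W pairs_null)) => q unmerged.
have [x [y [Kx Ky nxy]]] := never_merged_never_meet (K_fin q) (fun n => unmerged n I).
have [KW|] := pselect (K q `<=` W b); [right|by left].
wlog xy : x y Kx Ky nxy / (x <= y)%N => [wlog|].
  case: (leqP x y) => [|/ltnW] xy; first exact: (wlog x y).
  by apply: (wlog y x); rewrite // never_meetC.
exists x => //; exists y => //.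
by rewrite /even_gap xy /= (KW x Kx) (KW y Ky) eqxx.
Qed.

Theorem proposition3p7 (R : realType) (P : probability (Qspace R) R)
  (g1 g2 : R) (K : Qspace R -> set nat) :
  is_noise_law P -> 0 < g1 -> 0 < g2 ->
  finite_random_set K ->
  (exists b : bool, {ae P, forall q : Qspace R, K q `<=` W b}) ->
  forall eps : R, 0 < eps ->
    (fun n : nat => P [set q : Qspace R |
        eps <= `| (ncard (phi g1 g2 n q @` K q))%:R - 1 | ])
      @ \oo --> 0%E.
Proof.
move=> hP g1_gt0 g2_gt0 [K_random K_ne_fin] [b K_W] eps eps_gt0.
have K_fin q : finite_set (K q) := (K_ne_fin q).2.
have m_merged n : measurable (not_merged g1 g2 K n) by exact: measurable_not_merged.
apply: (@squeeze_cvge _ _ _ _ (cst 0%E) _ (P \o not_merged g1 g2 K)); last 2 first.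
- exact: cvg_cst.
- rewrite -(never_merged_null hP g1_gt0 g2_gt0 K_random K_fin K_W).
  apply: nonincreasing_cvg_mu => //; last exact: not_merged_nonincreasing.
    by apply: le_lt_trans (probability_le1 _ _) (ltry _).
  exact: bigcapT_measurable.
apply: nearW => n; rewrite measure_ge0 /=; apply: le_measure; rewrite ?inE.
- apply/mem_set.
  exact: (measurable_ncard_image g1 g2 K_random K_fin n (fun k => eps <= `|k%:R - 1|)).
- exact/mem_set.
- by move=> q; exact: ncard_image_neq1 eps_gt0 (K_ne_fin q).1.
Qed.
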